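(* Consider a rule of the PJR-Exact family run on $(\mathcal{A},k)$, and fix $j$ with $1\le j\le k$ such that iterations $1,\dots,j$ are all normal. Then for every candidate $c\in C\setminus W_j$ with $\ell_j(c)\ge1$, $$\sum_{i\in N:\ c\in A_i,\ |A_i\cap W_j|<\ell_j(c)}\left(f_i^j-\frac{\ell_j(c)-|A_i\cap W_j|-1}{\ell_j(c)}\right)\ \ge\ q.$$
   Context: Setting: voters $N=\{1,\dots,n\}$, candidates $C=\{c_1,\dots,c_m\}$, approval ballots $A_i\subseteq C$, $\mathcal{A}=(A_1,\dots,A_n)$, $k$ a positive integer with $k\le|C|$, $q=n/k$, $N_c=\{i: c\in A_i\}$. Convention: $\max\emptyset=0$. Dissatisfaction level: for $W\subseteq C$ with $|W|\le k$ and $c\in C\setminus W$, $\ell(c,W)$ is the largest nonnegative integer $\ell$ with $\ell=\lfloor \frac{k}{n}|\{i\in N: c\in A_i,\ |A_i\cap W|<\ell\}|\rfloor$. PJR-Exact family: iterative procedures selecting $w_1,\dots,w_k$, $W_0=\emptyset$, $W_j=W_{j-1}\cup\{w_j\}$, $w_j\notin W_{j-1}$, with vote fractions $f_i^0=1$, $0\le f_i^j\le f_i^{j-1}$, such that at each iteration $j$: (a) $f_i^j=f_i^{j-1}$ for $i\notin N_{w_j}$; (b) with $s=\sum_{i\in N_{w_j}}f_i^{j-1}$, if $s>q$ then $\sum_{i\in N_{w_j}}(f_i^{j-1}-f_i^j)=q$, and if $s\le q$ then $f_i^j=0$ for all $i\in N_{w_j}$; (c) if some $c\in C\setminus W_{j-1}$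 has $\sum_{i\in N_c}f_i^{j-1}\ge q$ then $\sum_{i\in N_{w_j}}f_i^{j-1}\ge q$. Notation along a run: $\ell_j(c)=\ell(c,W_j)$ for $c\in C\setminus W_j$; for $c\in C\setminus W_j$ and $i\in N_c$, $\ell_j(i,c)=\max_{c'\in A_i\setminus(W_j\cup\{c\})}\ell_j(c')$; $g_i^j(c)=0$ if $\ell_j(i,c)\le|A_i\cap W_j|$ and $g_i^j(c)=\frac{\ell_j(i,c)-|A_i\cap W_j|-1}{\ell_j(i,c)}$ otherwise. Normal state: $c\in C\setminus W_j$ is in normal state after $j$ iterations if (1) for each $i\in N_c$ with $\ell_j(i,c)>|A_i\cap W_j|$ we have $f_i^j\ge\frac{\ell_j(i,c)-|A_i\cap W_j|}{\ell_j(i,c)}$, and (2) $\sum_{i\in N_c}(f_i^j-g_i^j(c))\ge q$. Normal iteration: iteration $j$ ($1\le j\le k$) is normal if $w_j$ is in normal state after $j-1$ iterations and, for each $i\in N_{w_j}$ with $\ell_{j-1}(i,w_j)>|A_i\cap W_{j-1}|$, $f_i^j\ge\frac{\ell_{j-1}(i,w_j)-|A_i\cap W_j|}{\ell_{j-1}(i,w_j)}$. *)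

From HB Require Import structures.
From mathcomp Require Import all_boot all_order all_algebra.
Set Implicit Arguments. Unset Strict Implicit. Unset Printing Implicit Defensive.
Import Order.TTheory GRing.Theory Num.Theory.

(* Voters: finite type V (n = #|V|); candidates: finite type C (m = #|C|);
   approval ballots A : V -> {set C}; committee size k. *)

Section PJR.
Variables (V C : finType) (A : V -> {set C}) (k : nat).

Definition supporters (c : C) : {set V} := [set i | c \in A i].

Definition dcount (c : C) (W : {set C}) (l : nat) : nat :=
  #|[set i | (c \in A i) && (#|A i :&: W| < l)%N]|.

(* l(c,W): largest l >= 0 with l = floor(k/n * dcount c W l)
   = (k * dcount c W l) %/ n.  Any such l is <= k (dcount <= n), and l = 0
   always qualifies, so searching l in [0,k] gives exactly the largest one. *)
Definition dlevel (c : C) (W : {set C}) : nat :=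
  \max_(l < k.+1 | nat_of_ord l == ((k * dcount c W l) %/ #|V|)%N) nat_of_ord l.

Definition Wset (w : nat -> C) (j : nat) : {set C} :=
  \bigcup_(1 <= t < j.+1) [set w t].

Definition ilevel (W : {set C}) (i : V) (c : C) : nat :=
  \max_(c' in A i :\: (W :|: [set c])) dlevel c' W.

Variable R : realFieldType.
Local Open Scope ring_scope.

Definition quota : R := (#|V|%:R) / (k%:R).

Definition gfun (W : {set C}) (i : V) (c : C) : R :=
  let L := ilevel W i c in
  let a := #|A i :&: W| in
  if (L <= a)%N then 0 else (L%:R - a%:R - 1) / L%:R.

Definition normal_state (fj : V -> R) (W : {set C}) (c : C) : Prop :=
  (forall i, c \in A i -> (#|A i :&: W| < ilevel W i c)%N ->
     ((ilevel W i c)%:R - (#|A i :&: W|)%:R) / (ilevel W i c)%:R <= fj i) /\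
  quota <= \sum_(i | c \in A i) (fj i - gfun W i c).

(* A run of a PJR-Exact rule: winners w_1..w_k (w : nat -> C, only indices
   1..k matter) and vote fractions f^0..f^k (f : nat -> V -> R). *)
Definition pjr_exact_run (w : nat -> C) (f : nat -> V -> R) : Prop :=
  (forall i, f 0%N i = 1) /\
  forall j : nat, (1 <= j <= k)%N ->
    [/\ w j \notin Wset w j.-1,
        (forall i, 0 <= f j i /\ f j i <= f j.-1 i),
        (forall i, w j \notin A i -> f j i = f j.-1 i),
        (quota < \sum_(i | w j \in A i) f j.-1 i ->
           \sum_(i | w j \in A i) (f j.-1 i - f j i) = quota) /\
        (\sum_(i | w j \in A i) f j.-1 i <= quota ->
           forall i, w j \in A i -> f j i = 0)
      &
        ((exists c, c \notin Wset w j.-1 /\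
                    quota <= \sum_(i | c \in A i) f j.-1 i) ->
         quota <= \sum_(i | w j \in A i) f j.-1 i)].

Definition normal_iteration (w : nat -> C) (f : nat -> V -> R) (j : nat) : Prop :=
  normal_state (f j.-1) (Wset w j.-1) (w j) /\
  forall i, w j \in A i ->
    (#|A i :&: Wset w j.-1| < ilevel (Wset w j.-1) i (w j))%N ->
    ((ilevel (Wset w j.-1) i (w j))%:R - (#|A i :&: Wset w j|)%:R)
      / (ilevel (Wset w j.-1) i (w j))%:R <= f j i.

End PJR.

From HB Require Import structures.
From mathcomp Require Import all_boot all_order all_algebra.
From mathcomp Require Import lra.
Import Order.TTheory GRing.Theory Num.Theory.

Set Implicit Arguments.
Unset Strict Implicit.
Unset Printing Implicit Defensive.

(* Fix a candidate c outside W_j with level l = l_j(c).  By induction along the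
   run, every supporter i of c with |A_i ∩ W_t| < l keeps f_i^t >= (l - |A_i ∩ W_t|)/l:
   an iteration not approved by i changes neither side, and a normal iteration
   approved by i gives the same bound with l_{t-1}(i, w_t) >= l_{t-1}(c) >= l in
   place of l, which is stronger.  Hence every term of the sum is at least 1/l,
   and since l = floor(k d / n) for the number d of such voters, d/l >= n/k = q. *)

Lemma homo_bounded_fixpoint_ge (h : nat -> nat) (b m0 : nat) :
  {homo h : x y / x <= y} -> (forall m, h m <= b) -> m0 <= h m0 ->
  exists2 m, m0 <= m & h m = m.
Proof.
move=> h_homo h_le_b m0_le.
pose P m := (m0 <= m <= b) && (m <= h m).
have exP : exists m, P m by exists m0; rewrite /P leqnn (leq_trans m0_le).
have ubP m : P m -> m <= b by case/andP=> /andP[].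
have [m /andP[/andP[m0m _] m_le] m_max] := ex_maxnP exP ubP.
exists m => //; apply/eqP; rewrite eqn_leq m_le andbT.
by apply: m_max; rewrite /P (leq_trans m0m m_le) h_le_b h_homo.
Qed.

Lemma cardI_setU1 (T : finType) (B W : {set T}) (x : T) :
  x \in B -> x \notin W -> #|B :&: (x |: W)| = #|B :&: W|.+1.
Proof.
move=> xB xW; rewrite setIUr (setIidPr _) ?sub1set // cardsU1.
by rewrite inE (negbTE xW) andbF.
Qed.

Lemma setI_setU1_notin (T : finType) (B W : {set T}) (x : T) :
  x \notin B -> B :&: (x |: W) = B :&: W.
Proof.
move=> xB; apply/setP => y; rewrite !inE.
by case: eqP => [->|//]; rewrite (negbTE xB).
Qed.

Section Wset.
Variables (C : finType) (w : nat -> C).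

Lemma Wset0 : Wset w 0 = set0.
Proof. by rewrite /Wset big_geq. Qed.

Lemma WsetS t : Wset w t.+1 = w t.+1 |: Wset w t.
Proof. by rewrite /Wset big_nat_recr //= setUC. Qed.

End Wset.

Section Levels.
Variables (V C : finType) (A : V -> {set C}) (k : nat).

Lemma dcount_homo_level c W : {homo dcount A c W : l1 l2 / l1 <= l2}.
Proof.
move=> l1 l2 l12; apply/subset_leq_card/subsetP => i; rewrite !inE.
by case/andP=> -> /leq_trans->.
Qed.

Lemma dcount_antitone c (W1 W2 : {set C}) l :
  W1 \subset W2 -> dcount A c W2 l <= dcount A c W1 l.
Proof.
move=> sW; apply/subset_leq_card/subsetP => i; rewrite !inE.
by case/andP=> -> /=; apply/leq_ltn_trans/subset_leq_card/setIS.
Qed.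

Lemma divn_mul_card_le c W l : (k * dcount A c W l) %/ #|V| <= k.
Proof.
have [->|n_gt0] := posnP #|V|; first by rewrite divn0.
by rewrite -[X in _ <= X](mulnK k n_gt0) leq_div2r // leq_mul2l max_card orbT.
Qed.

Let dlevel_pred c W := [pred l : 'I_k.+1 | nat_of_ord l == (k * dcount A c W l) %/ #|V|].

Lemma dlevel_fixed c W : dlevel A k c W = (k * dcount A c W (dlevel A k c W)) %/ #|V|.
Proof.
have dcount0 : dcount A c W 0 = 0.
  by apply/eqP; rewrite cards_eq0; apply/eqP/setP => i; rewrite !inE ltn0 andbF.
rewrite /dlevel.
have [|l /eqP l_fix -> //] := @eq_bigmax_cond _ (dlevel_pred c W) (@nat_of_ord _).
by apply/card_gt0P; exists ord0; rewrite inE /= dcount0 muln0 div0n.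
Qed.

Lemma leq_dlevel c W l : l = (k * dcount A c W l) %/ #|V| -> l <= dlevel A k c W.
Proof.
move=> l_fix; have lk : l < k.+1 by rewrite ltnS l_fix divn_mul_card_le.
by apply: (@leq_bigmax_cond _ (dlevel_pred c W) _ (Ordinal lk)); rewrite /= -l_fix.
Qed.

Lemma dlevel_mul_card_le c W :
  dlevel A k c W * #|V| <= k * dcount A c W (dlevel A k c W).
Proof. by rewrite {1}dlevel_fixed leq_divM. Qed.

(* The level for W2 is a post-fixpoint of the map defining the level for W1,
   and above a post-fixpoint of a bounded monotone map lies a fixpoint. *)
Lemma dlevel_antitone c (W1 W2 : {set C}) :
  W1 \subset W2 -> dlevel A k c W2 <= dlevel A k c W1.
Proof.
move=> sW.
pose h l := (k * dcount A c W1 l) %/ #|V|.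
have h_homo : {homo h : x y / x <= y}.
  by move=> x y xy; rewrite leq_div2r // leq_mul2l dcount_homo_level ?orbT.
have post_fix : dlevel A k c W2 <= h (dlevel A k c W2).
  by rewrite {1}dlevel_fixed leq_div2r // leq_mul2l dcount_antitone ?orbT.
have [l l2_le /esym l_fix] :=
  homo_bounded_fixpoint_ge h_homo (divn_mul_card_le c W1) post_fix.
by rewrite (leq_trans l2_le) ?leq_dlevel.
Qed.

Lemma dlevel_le_ilevel (W : {set C}) i (c x : C) :
  c \in A i -> c \notin W -> c != x -> dlevel A k c W <= ilevel A k W i x.
Proof.
move=> cA cW cx; apply: (@leq_bigmax_cond _ _ (fun c' => dlevel A k c' W)).
by rewrite !inE cA negb_or cW cx.
Qed.

End Levels.

Local Open Scope ring_scope.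

Lemma divB_le_mono (R : realFieldType) (x y a : R) :
  0 < x -> x <= y -> 0 <= a -> (x - a) / x <= (y - a) / y.
Proof.
move=> x_gt0 xy a_ge0; have y_gt0 : 0 < y by apply: lt_le_trans xy.
rewrite ler_pdivrMr // mulrAC ler_pdivlMr //; nra.
Qed.

Section Run.
Variables (R : realFieldType) (V C : finType) (A : V -> {set C}) (k : nat).
Variables (w : nat -> C) (f : nat -> V -> R) (j : nat).
Hypothesis run : pjr_exact_run A k w f.
Hypothesis j_le_k : (j <= k)%N.
Hypothesis normal : forall t, (1 <= t <= j)%N -> normal_iteration A k w f t.

Lemma fraction_ge_level t c i (l : nat) :
  (t <= j)%N -> c \notin Wset w t -> (l <= dlevel A k c (Wset w t))%N -> c \in A i ->
  (#|A i :&: Wset w t| < l)%N -> (l%:R - #|A i :&: Wset w t|%:R) / l%:R <= f t i.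
Proof.
elim: t => [|t IH] tj cW l_le cA lt_l.
  have l_gt0 : (0 < l)%N by apply: leq_ltn_trans lt_l.
  by rewrite Wset0 setI0 cards0 subr0 divff ?pnatr_eq0 -?lt0n // run.1.
have [wW _ f_keep _ _] := run.2 t.+1 (leq_trans tj j_le_k).
have /andP[cw {}cW] : (c != w t.+1) && (c \notin Wset w t).
  by rewrite -negb_or -in_setU1 -WsetS.
have l_le' : (l <= dlevel A k c (Wset w t))%N.
  by rewrite (leq_trans l_le) // dlevel_antitone // WsetS subsetUr.
have [wA|wA] := boolP (w t.+1 \in A i); last first.
  rewrite f_keep // WsetS setI_setU1_notin // in lt_l *.
  exact: IH (ltnW tj) cW l_le' cA lt_l.
have [_ normal_w] := normal (t := t.+1) tj.
set L := ilevel A k (Wset w t) i (w t.+1) in normal_w.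
have lL : (l <= L)%N by rewrite (leq_trans l_le') ?dlevel_le_ilevel.
have card_step : #|A i :&: Wset w t.+1| = #|A i :&: Wset w t|.+1.
  by rewrite WsetS cardI_setU1.
apply: (le_trans _ (normal_w i wA _)).
  by apply: divB_le_mono; rewrite ?ler_nat ?ler0n ?ltr0n // (leq_ltn_trans _ lt_l).
by rewrite (leq_trans _ lL) // ltnW // -card_step.
Qed.

End Run.

Lemma quota_le_div (R : realFieldType) (V : finType) (k d l : nat) :
  (0 < k)%N -> (0 < l)%N -> (l * #|V| <= k * d)%N -> quota V k R <= d%:R / l%:R.
Proof.
move=> k_gt0 l_gt0; rewrite -(ler_nat R) !natrM => le_lnkd.
rewrite /quota ler_pdivrMr ?ltr0n // mulrAC ler_pdivlMr ?ltr0n //.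
by rewrite mulrC [_ * k%:R]mulrC.
Qed.

Theorem mainTheorem5 (R : realFieldType) (V C : finType) (A : V -> {set C})
  (k : nat) (hn : (0 < #|V|)%N) (hk : (0 < k)%N) (hkC : (k <= #|C|)%N)
  (w : nat -> C) (f : nat -> V -> R) :
  pjr_exact_run A k w f ->
  forall j : nat, (1 <= j <= k)%N ->
  (forall t : nat, (1 <= t <= j)%N -> normal_iteration A k w f t) ->
  forall c : C, c \notin Wset w j ->
  (1 <= dlevel A k c (Wset w j))%N ->
  quota V k R <=
    \sum_(i | (c \in A i) && (#|A i :&: Wset w j| < dlevel A k c (Wset w j))%N)
      (f j i - ((dlevel A k c (Wset w j))%:R - (#|A i :&: Wset w j|)%:R - 1)
                 / (dlevel A k c (Wset w j))%:R).
Proof.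
move=> run j /andP[_ j_le_k] normal c cW.
set W := Wset w j; set l := dlevel A k c W => l_gt0.
apply: le_trans (quota_le_div R hk l_gt0 (dlevel_mul_card_le A k c W)) _.
rewrite /dcount cardsE -sumr_const mulr_suml.
apply: ler_sum => i /andP[cA lt_l].
have := fraction_ge_level run j_le_k normal (leqnn j) cW (leqnn l) cA lt_l.
rewrite lerBrDr; apply: le_trans.
by rewrite -mulrDl addrC subrK.
Qed.
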